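(* Let $T>0$, let $f,h,g:[0,T]\to\mathbb{R}$ be continuous with $g$ not identically zero, and let $\mathbf{m},x_0,x_T\in\mathbb{R}^d$. For a control $\mathbf{u}:[0,T]\to\mathbb{R}^d$ let $\mathbf{x}^u$ solve $\frac{d\mathbf{x}_t}{dt}=f_t\mathbf{x}_t+h_t\mathbf{m}+g_t\mathbf{u}_t$, $\mathbf{x}^u_0=x_0$, and for $\gamma\in(0,\infty)$ let $$\mathcal{J}(\mathbf{u},\gamma)=\int_0^T\tfrac12\|\mathbf{u}_t\|_2^2\,dt+\tfrac\gamma2\|\mathbf{x}^u_T-x_T\|_2^2 .$$ Let $\mathbf{u}^*_{\cdot,\gamma}$ be the optimal control minimizing $\mathcal{J}(\cdot,\gamma)$, and let $\mathbf{u}^*_{t,\infty}=\lim_{\gamma\to\infty}\mathbf{u}^*_{t,\gamma}$ (for each $t$), and define $$\mathcal{J}(\mathbf{u}^*_{\cdot,\infty},\infty)=\int_0^T\tfrac12\|\mathbf{u}^*_{t,\infty}\|_2^2\,dt+\lim_{\gamma\to\infty}\tfrac\gamma2\|\mathbf{x}^{u^*_{\gamma}}_T-x_T\|_2^2 .$$ Then for every $\gamma\in(0,\infty)$, $$\mathcal{J}(\mathbf{u}^*_{\cdot,\gamma},\gamma)\le\mathcal{J}(\mathbf{u}^*_{\cdot,\infty},\infty).$$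
   Context: Notation: $\bar f_t=\int_0^t f_z\,dz$, $\bar h_T=\int_0^T e^{-\bar f_z}h_z\,dz$, $\bar g^2_T=\int_0^T e^{-2\bar f_z}g_z^2\,dz$, $a=e^{\bar f_T}x_0+\mathbf{m}e^{\bar f_T}\bar h_T-x_T$. Explicitly the optimal control is $\mathbf{u}^*_{t,\gamma}=-g_te^{\bar f_T-\bar f_t}\,a/(\gamma^{-1}+e^{2\bar f_T}\bar g^2_T)$, so $\mathbf{u}^*_{t,\infty}=-g_te^{\bar f_T-\bar f_t}\,a/(e^{2\bar f_T}\bar g^2_T)$, which steers $x_0$ exactly to $x_T$; the limit term in $\mathcal{J}(\mathbf{u}^*_{\cdot,\infty},\infty)$ equals $0$. *)

From HB Require Import structures.
From mathcomp Require Import all_boot all_order all_algebra.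
From mathcomp Require Import all_classical all_reals all_analysis.
Set Implicit Arguments. Unset Strict Implicit. Unset Printing Implicit Defensive.
Import Order.TTheory GRing.Theory Num.Theory.
Import numFieldNormedType.Exports.
Local Open Scope classical_set_scope.
Local Open Scope ring_scope.

Section Defs.
Context {R : realType} {d : nat}.

Definition sqnorm (v : 'I_d -> R) : R := \sum_(i < d) v i ^+ 2.

Definition admissible (T : R) (u : R -> 'I_d -> R) : Prop :=
  forall i, {within `[0, T], continuous (fun t => u t i)}.

Definition solves (T : R) (f h g : R -> R) (m x0 : 'I_d -> R)
    (u x : R -> 'I_d -> R) : Prop :=
  x 0 = x0 /\
  forall i, {within `[0, T], continuous (fun t => x t i)} /\
    forall t, t \in `]0, T[ ->
      is_derive t 1 (fun s => x s i) (f t * x t i + h t * m i + g t * u t i).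

Definition Jcost (T gam : R) (xT : 'I_d -> R) (u x : R -> 'I_d -> R) : \bar R :=
  (\int[lebesgue_measure]_(t in [set` `[0, T]%R]) (2^-1 * sqnorm (u t))%:E
    + (gam / 2 * sqnorm (fun i => x T i - xT i))%:E)%E.

Definition optimal (T gam : R) (f h g : R -> R) (m x0 xT : 'I_d -> R)
    (u x : R -> 'I_d -> R) : Prop :=
  admissible T u /\ solves T f h g m x0 u x /\
  forall v y, admissible T v -> solves T f h g m x0 v y ->
    (Jcost T gam xT u x <= Jcost T gam xT v y)%E.

End Defs.

From HB Require Import structures.
From mathcomp Require Import all_boot all_order all_algebra.
From mathcomp Require Import all_classical all_reals all_analysis.
From mathcomp Require Import ring lra.
Set Implicit Arguments. Unset Strict Implicit. Unset Printing Implicit Defensive.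
Import Order.TTheory GRing.Theory Num.Theory.
Import numFieldNormedType.Exports.
Local Open Scope classical_set_scope.
Local Open Scope ring_scope.

(** Perturbing an optimal control [u] in a direction [w], with [z] the response
   of the homogeneous dynamics started at [0], makes the cost a quadratic in the
   step size minimised at [0], so [\int <u, w> + gam <x_T - xT, z_T> = 0].  By
   Duhamel's formula [z_T = \int psi w] with [psi s = e^(F T - F s) g s],
   [F] a primitive of [f]; taking [w = u + gam (x_T - xT) psi] gives
   [\int |w|^2 = 0], so every optimal control is a constant vector [p_gam] times
   the profile [psi].  Pointwise convergence at a point where [psi] does not
   vanish then gives [p_gam --> q] and [u_inf = q psi], hence convergence of the
   control energies.  Finally, for [c >= gam], [J(u_gam, gam) <= J(u_c, gam)
   <= J(u_c, c)], and the right-hand side tends to [J(u_inf, inf)]. *)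

Section within_continuity.
Context {R : realType} (A : set R).
Implicit Types a b : R -> R.

Lemma within_continuousM a b : {within A, continuous a} ->
  {within A, continuous b} -> {within A, continuous (fun t => a t * b t)}.
Proof. by move=> ha hb x; apply: cvgM; [exact: ha | exact: hb]. Qed.

Lemma within_continuousN a : {within A, continuous a} ->
  {within A, continuous (fun t => - a t)}.
Proof. by move=> ha x; apply: cvgN; exact: ha. Qed.

Lemma within_continuous_expR a : {within A, continuous a} ->
  {within A, continuous (fun t => expR (a t))}.
Proof. by move=> ha x; exact: continuous_comp (ha x) (@continuous_expR R (a x)). Qed.

Lemma within_continuous_sum (I : Type) (r : seq I) (a : I -> R -> R) :
  (forall i, {within A, continuous (a i)}) ->
  {within A, continuous (fun t => \sum_(i <- r) a i t)}.
Proof.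
by move=> ha; apply: continuous_big => [|i _]; [exact: add_continuous | exact: ha].
Qed.

Lemma within_continuousZ (c : R) a : {within A, continuous a} ->
  {within A, continuous (fun t => c * a t)}.
Proof. by apply: within_continuousM; exact: cst_continuous. Qed.

End within_continuity.

Section sqnorm.
Context {R : realType} {d : nat}.
Implicit Types p q : 'I_d -> R.

Lemma sqnorm_ge0 p : 0 <= sqnorm p.
Proof. by apply: sumr_ge0 => i _; exact: sqr_ge0. Qed.

Lemma sqnorm_eq0 p : sqnorm p = 0 -> p =1 (fun=> 0).
Proof.
move/eqP; rewrite psumr_eq0 => [/allP p0 i|i _]; last exact: sqr_ge0.
by apply/eqP; rewrite -sqrf_eq0; exact: p0 (mem_index_enum i).
Qed.

Lemma sqnorm_scale p (a : R) : sqnorm (fun i => p i * a) = sqnorm p * a ^+ 2.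
Proof. by rewrite /sqnorm mulr_suml; apply: eq_bigr => i _; rewrite exprMn. Qed.

Lemma sqnorm_add_scale p q (e : R) :
  sqnorm (fun i => p i + e * q i) =
  sqnorm p + 2 * e * (\sum_(i < d) p i * q i) + e ^+ 2 * sqnorm q.
Proof.
by rewrite /sqnorm !mulr_sumr -!big_split; apply: eq_bigr => i _ /=; ring.
Qed.

Lemma cvg_sqnorm {C : Type} (F : set_system C) {FF : Filter F}
    (p : C -> 'I_d -> R) q :
  (forall i, p ^~ i @ F --> q i) -> sqnorm (p c) @[c --> F] --> sqnorm q.
Proof.
move=> pq; apply: cvg_big => [|i _]; first exact: add_continuous.
by under eq_cvg do rewrite expr2; rewrite expr2; exact: cvgM.
Qed.

End sqnorm.

Lemma quadratic_ge0_linear_eq0 {R : realFieldType} (P Q : R) :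
  (forall e, 0 <= e * P + e ^+ 2 * Q) -> P = 0.
Proof.
move=> PQ; pose k := `|Q| + 1.
have k0 : 0 < k by rewrite ltr_pwDr.
have Qk : Q < k by have := ler_norm Q; rewrite /k; lra.
have := PQ (- P / k).
have -> : - P / k * P + (- P / k) ^+ 2 * Q = (P / k) ^+ 2 * (Q - k).
  by field; rewrite gt_eqF.
rewrite nmulr_lge0 ?subr_lt0 // => P2.
have : (P / k) ^+ 2 == 0 by rewrite eq_le P2 sqr_ge0.
by rewrite sqrf_eq0 mulf_eq0 invr_eq0 (gt_eqF k0) orbF => /eqP.
Qed.

Section segment_integral.
Context {R : realType}.
Notation mu := (@lebesgue_measure R).
Implicit Types (a b : R) (h : R -> R).

Lemma within_continuous_integrable a b h : {within `[a, b], continuous h} ->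
  mu.-integrable `[a, b] (EFin \o h).
Proof.
by move=> hc; apply: continuous_compact_integrable => //; exact: segment_compact.
Qed.

Lemma integral_within_continuous a b h : {within `[a, b], continuous h} ->
  (\int[mu]_(x in `[a, b]) (h x)%:E)%E = (\int[mu]_(x in `[a, b]) h x)%:E.
Proof.
move=> hc; rewrite fineK //; apply: integrable_fin_num => //.
exact: within_continuous_integrable.
Qed.

Lemma Rintegral_sum_within_continuous a b (I : Type) (r : seq I)
    (h : I -> R -> R) :
  (forall i, {within `[a, b], continuous (h i)}) ->
  \int[mu]_(x in `[a, b]) (\sum_(i <- r) h i x) =
  \sum_(i <- r) \int[mu]_(x in `[a, b]) h i x.
Proof.
move=> hc; elim: r => [|i r IHr].
  by under eq_Rintegral do rewrite big_nil; rewrite big_nil Rintegral_cst // mul0r.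
under eq_Rintegral do rewrite big_cons.
rewrite big_cons RintegralD // ?IHr //; apply: within_continuous_integrable => //.
exact: within_continuous_sum.
Qed.

Lemma within_continuous_gt_subsegment a b h c t : a < b ->
  {within `[a, b], continuous h} -> t \in `[a, b] -> c < h t ->
  exists a' b', [/\ a' < b', `[a', b'] `<=` `[a, b] &
                    forall y, y \in `[a', b'] -> c < h y].
Proof.
move=> ab hc tab ct.
have : within `[a, b] (nbhs t) [set y | `|h t - h y| < h t - c].
  rewrite nbhs_subspace_in; last by rewrite inE in tab.
  by move: (hc t) => /cvgrPdist_lt; apply; rewrite subr_gt0.
move=> /nbhs_ballP[e /= e0 near_t].
move: tab; rewrite in_itv /= => /andP[a_t t_b].
exists (Num.max a (t - e / 2)), (Num.min b (t + e / 2)); split.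
- by rewrite lt_min !gt_max ab /=; apply/and3P; split; lra.
- move=> y /=; rewrite !in_itv /= ge_max le_min => /andP[/andP[ay _] /andP[yb _]].
  by rewrite ay yb.
- move=> y; rewrite in_itv /= ge_max le_min => /andP[/andP[ay ty] /andP[yb yt]].
  have tey : ball t e y by rewrite /ball /= ltr_norml; apply/andP; split; lra.
  have := near_t y tey; rewrite in_itv /= ay yb => /(_ isT).
  by rewrite ltr_norml => /andP[_]; lra.
Qed.

Lemma within_continuous_ge0_Rintegral_eq0 a b h : a < b ->
  {within `[a, b], continuous h} -> (forall t, t \in `[a, b] -> 0 <= h t) ->
  \int[mu]_(x in `[a, b]) h x = 0 -> forall t, t \in `[a, b] -> h t = 0.
Proof.
move=> ab hc h0 hI t tab; apply/eqP; rewrite eq_le h0 // andbT leNgt.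
apply/negP => ht; pose c := h t / 2.
have c0 : 0 < c by rewrite divr_gt0.
have cht : c < h t by rewrite /c; lra.
have [a' [b' [ab' sub ch]]] := within_continuous_gt_subsegment ab hc tab cht.
have mh := measurable_int mu (within_continuous_integrable hc).
have : (\int[mu]_(x in `[a', b']) c%:E <= \int[mu]_(x in `[a, b]) (h x)%:E)%E.
  apply: le_trans (ge0_subset_integral mu _ _ mh _ sub) => //.
  apply: ge0_le_integral => //.
  - by move=> y _; rewrite lee_fin ltW.
  - exact: measurable_funS mh.
  - by move=> y /= ya'b'; rewrite lee_fin ltW // ch.
rewrite integral_within_continuous // hI.
rewrite (@integral_within_continuous a' b' (fun=> c)) ?Rintegral_cst //; last first.
  exact: cst_continuous.
have -> : fine (mu `[a', b']) = b' - a'.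
  by rewrite (@lebesgue_measure_itv R `[a', b']) /= lte_fin ab' -EFinD.
rewrite lee_fin.
have : 0 < c * (b' - a') by rewrite mulr_gt0 // subr_gt0.
lra.
Qed.

End segment_integral.

Section linear_dynamics.
Context {R : realType}.
Notation mu := (@lebesgue_measure R).

Definition primitive (f : R -> R) (t : R) : R := \int[mu]_(s in `[0, t]) f s.

Definition steering_profile (T : R) (f g : R -> R) (s : R) : R :=
  expR (primitive f T - primitive f s) * g s.

Definition duhamel (f g w : R -> R) (t : R) : R :=
  expR (primitive f t) * primitive (fun s => expR (- primitive f s) * g s * w s) t.

Lemma primitive0 f : primitive f 0 = 0.
Proof. by rewrite /primitive set_itv1 Rintegral_set1. Qed.

Variable T : R.
Hypothesis T0 : 0 < T.

Lemma within_continuous_primitive f : {within `[0, T], continuous f} ->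
  {within `[0, T], continuous (primitive f)}.
Proof.
by move=> hf; apply: parameterized_integral_continuous (ltW T0) _;
  exact: within_continuous_integrable.
Qed.

Lemma is_derive_primitive f t : {within `[0, T], continuous f} ->
  t \in `]0, T[ -> is_derive t 1 (primitive f) (f t).
Proof.
move=> hf tT; have /andP[t0 tT'] : 0 < t < T by rewrite in_itv in tT.
have [F_derivable <-] := continuous_FTC1_closed tT' (within_continuous_integrable hf) t0
  (within_continuous_continuous T0 hf tT).
by rewrite derive1E; exact: derivableP.
Qed.

Variables f g : R -> R.
Hypotheses (hf : {within `[0, T], continuous f})
           (hg : {within `[0, T], continuous g}).

Lemma within_continuous_steering_profile :
  {within `[0, T], continuous (steering_profile T f g)}.
Proof.
apply: within_continuousM hg; apply: within_continuous_expR.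
apply: within_continuousD; first exact: cst_continuous.
exact/within_continuousN/within_continuous_primitive.
Qed.

Section duhamel.
Variable w : R -> R.
Hypothesis hw : {within `[0, T], continuous w}.

Let within_continuous_kernel :
  {within `[0, T], continuous (fun s => expR (- primitive f s) * g s * w s)}.
Proof.
apply: within_continuousM hw; apply: within_continuousM hg.
exact/within_continuous_expR/within_continuousN/within_continuous_primitive.
Qed.

Lemma duhamel0 : duhamel f g w 0 = 0.
Proof. by rewrite /duhamel !primitive0 mulr0. Qed.

Lemma within_continuous_duhamel : {within `[0, T], continuous (duhamel f g w)}.
Proof.
apply: within_continuousM; last exact: within_continuous_primitive.
exact/within_continuous_expR/within_continuous_primitive.
Qed.

Lemma is_derive_duhamel t : t \in `]0, T[ ->
  is_derive t 1 (duhamel f g w) (f t * duhamel f g w t + g t * w t).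
Proof.
move=> tT; have dexp := is_derive1_comp (is_derive_expR _) (is_derive_primitive hf tT).
have -> : duhamel f g w =
  (expR \o primitive f) * primitive (fun s => expR (- primitive f s) * g s * w s) by [].
apply: is_derive_eq (is_deriveM dexp (is_derive_primitive within_continuous_kernel tT)) _.
by rewrite /GRing.scale /comp /= !mulrA -expRD addrN expR0 mul1r; ring.
Qed.

Lemma duhamel_terminal :
  duhamel f g w T = \int[mu]_(s in `[0, T]) (steering_profile T f g s * w s).
Proof.
rewrite /duhamel /primitive -RintegralZl //.
  by apply: eq_Rintegral => s _; rewrite /steering_profile expRD !mulrA.
exact: within_continuous_integrable.
Qed.

End duhamel.

Lemma solves_duhamel {d : nat} (h : R -> R) (w : R -> 'I_d -> R) :
  admissible T w ->
  solves T f h g (fun=> 0) (fun=> 0) w (fun t i => duhamel f g (w^~ i) t).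
Proof.
move=> hw; split; first by apply/funext => i; exact: duhamel0.
move=> i; split; first exact: within_continuous_duhamel.
move=> t tT; apply: is_derive_eq (is_derive_duhamel (hw i) tT) _.
by rewrite mulr0 addr0.
Qed.

End linear_dynamics.

Lemma solves_superposition {R : realType} {d : nat} (T : R) (f h g : R -> R)
    (m x0 : 'I_d -> R) (u x w z : R -> 'I_d -> R) (e : R) :
  solves T f h g m x0 u x -> solves T f h g (fun=> 0) (fun=> 0) w z ->
  solves T f h g m x0 (fun t i => u t i + e * w t i) (fun t i => x t i + e * z t i).
Proof.
move=> [x_0 hx] [z_0 hz]; split.
  by apply/funext => i; rewrite x_0 z_0 mulr0 addr0.
move=> i; have [xc xd] := hx i; have [zc zd] := hz i; split.
  exact: within_continuousD xc (within_continuousZ zc).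
move=> t tT; apply: is_derive_eq (is_deriveD (xd t tT) (is_deriveZ e (zd t tT))) _.
by rewrite /GRing.scale /=; ring.
Qed.

Section cost.
Context {R : realType} {d : nat}.
Notation mu := (@lebesgue_measure R).
Variable T : R.
Implicit Types (u w : R -> 'I_d -> R) (p : 'I_d -> R) (psi : R -> R).

Definition energy u : R := \int[mu]_(t in `[0, T]) (2^-1 * sqnorm (u t)).

Definition scaled_profile psi p u : Prop :=
  forall t, t \in `[0, T] -> forall i, u t i = p i * psi t.

Lemma admissible_add_scale u w e : admissible T u -> admissible T w ->
  admissible T (fun t i => u t i + e * w t i).
Proof.
by move=> hu hw i; apply: within_continuousD (hu i) (within_continuousZ (hw i)).
Qed.

Lemma admissible_scaled_profile psi p u : {within `[0, T], continuous psi} ->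
  scaled_profile psi p u -> admissible T u.
Proof.
move=> hpsi hu i; apply: (@subspace_eq_continuous _ _ _ (fun t => p i * psi t)).
  by move=> t; rewrite inE => tT; exact/esym/hu.
exact: within_continuousZ.
Qed.

Lemma within_continuous_sqnorm u : admissible T u ->
  {within `[0, T], continuous (fun t => sqnorm (u t))}.
Proof.
by move=> hu; apply: within_continuous_sum => i; exact: within_continuousM.
Qed.

Lemma within_continuous_half_sqnorm u : admissible T u ->
  {within `[0, T], continuous (fun t => 2^-1 * sqnorm (u t))}.
Proof. by move=> hu; exact/within_continuousZ/within_continuous_sqnorm. Qed.

Lemma integral_half_sqnorm u : admissible T u ->
  (\int[mu]_(t in [set` `[0, T]%R]) (2^-1 * sqnorm (u t))%:E)%E = (energy u)%:E.
Proof.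
by move=> hu; rewrite (integral_within_continuous (within_continuous_half_sqnorm hu)).
Qed.

Lemma Jcost_energy gam xT u x : admissible T u ->
  Jcost T gam xT u x = (energy u + gam / 2 * sqnorm (fun i => x T i - xT i))%:E.
Proof. by move=> hu; rewrite /Jcost integral_half_sqnorm. Qed.

Lemma energy_add_scale u w e : admissible T u -> admissible T w ->
  energy (fun t i => u t i + e * w t i) =
  energy u + e * \int[mu]_(t in `[0, T]) (\sum_(i < d) u t i * w t i) +
  e ^+ 2 * energy w.
Proof.
move=> hu hw.
have cuw : {within `[0, T], continuous (fun t => \sum_(i < d) u t i * w t i)}.
  by apply: within_continuous_sum => i; exact: within_continuousM.
rewrite /energy -!RintegralZl //; try exact: within_continuous_integrable.
rewrite -!RintegralD //.
  by apply: eq_Rintegral => t _; rewrite sqnorm_add_scale; field.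
all: try apply: within_continuous_integrable; try apply: within_continuousD.
all: do ?apply: within_continuousZ.
all: by [exact: within_continuous_sqnorm | exact: within_continuous_half_sqnorm
          | exact: cuw].
Qed.

Lemma energy_scaled_profile psi p u : {within `[0, T], continuous psi} ->
  scaled_profile psi p u ->
  energy u = 2^-1 * sqnorm p * \int[mu]_(t in `[0, T]) psi t ^+ 2.
Proof.
move=> hpsi hu; rewrite -RintegralZl //; last first.
  by apply: within_continuous_integrable; exact: within_continuousM.
apply: eq_Rintegral => t; rewrite inE => tT.
rewrite (_ : u t = fun i => p i * psi t); last by apply/funext => i; rewrite hu.
by rewrite sqnorm_scale mulrA.
Qed.

End cost.

Section optimal_control.
Context {R : realType} {d : nat}.
Notation mu := (@lebesgue_measure R).
Variables (T gam : R) (f h g : R -> R) (m x0 xT : 'I_d -> R).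
Variables (u x : R -> 'I_d -> R).
Hypothesis opt : optimal T gam f h g m x0 xT u x.

Lemma optimal_first_variation w z : admissible T w ->
  solves T f h g (fun=> 0) (fun=> 0) w z ->
  \int[mu]_(t in `[0, T]) (\sum_(i < d) u t i * w t i) +
    gam * \sum_(i < d) (x T i - xT i) * z T i = 0.
Proof.
move=> hw hz; have [hu [hx ux_min]] := opt.
apply: (@quadratic_ge0_linear_eq0 _ _ (energy T w + gam / 2 * sqnorm (z T))) => e.
have := ux_min _ _ (admissible_add_scale (e := e) hu hw)
  (solves_superposition e hx hz).
rewrite !Jcost_energy //; last exact: admissible_add_scale.
rewrite (@lee_fin R) energy_add_scale //.
have -> : (fun i => x T i + e * z T i - xT i) = (fun i => (x T i - xT i) + e * z T i).
  by apply/funext => i; ring.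
rewrite sqnorm_add_scale; lra.
Qed.

Lemma optimal_cost_le v y c : admissible T v -> solves T f h g m x0 v y ->
  gam <= c ->
  energy T u + gam / 2 * sqnorm (fun i => x T i - xT i) <=
  energy T v + c / 2 * sqnorm (fun i => y T i - xT i).
Proof.
move=> hv hy gc; have [hu [_ ux_min]] := opt.
have := ux_min _ _ hv hy; rewrite !Jcost_energy // lee_fin => /le_trans; apply.
by rewrite lerD2l ler_wpM2r ?sqnorm_ge0 // ler_pM2r.
Qed.

Hypotheses (T0 : 0 < T) (hf : {within `[0, T], continuous f})
           (hg : {within `[0, T], continuous g}).

Lemma optimal_control_form :
  scaled_profile T (steering_profile T f g) (fun i => - (gam * (x T i - xT i))) u.
Proof.
have [hu _] := opt; pose psi := steering_profile T f g.
pose p i := gam * (x T i - xT i); pose w t i := u t i + p i * psi t.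
have hpsi : {within `[0, T], continuous psi}.
  exact: within_continuous_steering_profile.
have hw : admissible T w.
  by move=> i; apply: within_continuousD (hu i) (within_continuousZ hpsi).
have cuw : {within `[0, T], continuous (fun t => \sum_(i < d) u t i * w t i)}.
  by apply: within_continuous_sum => i; exact: within_continuousM.
have cpw : {within `[0, T], continuous (fun t => \sum_(i < d) p i * psi t * w t i)}.
  by apply: within_continuous_sum => i; apply: within_continuousM (hw i);
    exact: within_continuousZ.
have terminal : gam * \sum_(i < d) (x T i - xT i) * duhamel f g (w^~ i) T =
    \int[mu]_(t in `[0, T]) (\sum_(i < d) p i * psi t * w t i).
  rewrite Rintegral_sum_within_continuous => [|i]; last first.
    by apply: within_continuousM (hw i); exact: within_continuousZ.
  rewrite mulr_sumr; apply: eq_bigr => i _.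
  rewrite duhamel_terminal // mulrA -RintegralZl //; last first.
    by apply: within_continuous_integrable; exact: within_continuousM.
  by apply: eq_Rintegral => t _; rewrite /p /psi; ring.
have w_energy : \int[mu]_(t in `[0, T]) sqnorm (w t) = 0.
  have hz := solves_duhamel T0 hf hg h hw.
  rewrite -[RHS](optimal_first_variation hw hz) terminal.
  rewrite -RintegralD //; try exact: within_continuous_integrable.
  apply: eq_Rintegral => t _; rewrite -big_split; apply: eq_bigr => i _.
  by rewrite /w /=; ring.
have w0 := within_continuous_ge0_Rintegral_eq0 T0 (within_continuous_sqnorm hw)
  (fun t _ => sqnorm_ge0 (w t)) w_energy.
by move=> t tT i; have := sqnorm_eq0 (w0 t tT) i; rewrite /w /p /psi; lra.
Qed.

End optimal_control.

Section scaled_profile_limit.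
Context {R : realType} {d : nat} {C : Type} (F : set_system C).
Variables (T : R) (psi : R -> R).
Hypothesis hpsi : {within `[0, T], continuous psi}.
Variables (p : C -> 'I_d -> R) (u : C -> R -> 'I_d -> R).
Hypothesis u_form : \forall c \near F, scaled_profile T psi (p c) (u c).

Lemma scaled_profile_limit {FF : ProperFilter F} (uinf : R -> 'I_d -> R) t0 :
  (forall t, t \in `[0, T] -> forall i, (fun c => u c t i) @ F --> uinf t i) ->
  t0 \in `[0, T] -> psi t0 != 0 ->
  exists2 q, (forall i, p ^~ i @ F --> q i) & scaled_profile T psi q uinf.
Proof.
move=> cvg_u t0T psi_t0; pose q i := uinf t0 i / psi t0.
have cvg_p i : p ^~ i @ F --> q i.
  apply: cvg_trans (cvgM (cvg_u t0 t0T i) (cvg_cst (psi t0)^-1)).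
  apply: near_eq_cvg; near=> c.
  by rewrite /= (near u_form c) // mulfK.
exists q => // t tT i.
have : (fun c => u c t i) @ F --> q i * psi t.
  apply: cvg_trans (cvgM (cvg_p i) (cvg_cst (psi t))).
  apply: near_eq_cvg; near=> c.
  by rewrite /= (near u_form c).
exact: cvg_unique (cvg_u t tT i).
Unshelve. all: by end_near.
Qed.

Lemma cvg_energy_scaled_profile {FF : Filter F} q v :
  (forall i, p ^~ i @ F --> q i) ->
  scaled_profile T psi q v -> energy T (u c) @[c --> F] --> energy T v.
Proof.
move=> cvg_p v_form; rewrite (energy_scaled_profile hpsi v_form).
apply: cvg_trans (cvgM (cvgM (cvg_cst _) (cvg_sqnorm cvg_p)) (cvg_cst _)).
apply: near_eq_cvg; near=> c.
by rewrite (energy_scaled_profile hpsi (near u_form c _)).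
Unshelve. all: by end_near.
Qed.

End scaled_profile_limit.

Theorem proposition4p3 (R : realType) (d : nat) (T : R) (f h g : R -> R)
    (m x0 xT : 'I_d -> R)
    (ustar xstar : R -> R -> 'I_d -> R) (uinf : R -> 'I_d -> R) (L : R) :
  0 < T ->
  {within `[0, T], continuous f} ->
  {within `[0, T], continuous h} ->
  {within `[0, T], continuous g} ->
  (exists t, t \in `[0, T] /\ g t != 0) ->
  (forall gam, 0 < gam -> optimal T gam f h g m x0 xT (ustar gam) (xstar gam)) ->
  (forall t, t \in `[0, T] -> forall i,
     (fun gam => ustar gam t i) @ +oo --> uinf t i) ->
  (fun gam => gam / 2 * sqnorm (fun i => xstar gam T i - xT i)) @ +oo --> L ->
  forall gam, 0 < gam ->
    (Jcost T gam xT (ustar gam) (xstar gam)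
      <= \int[lebesgue_measure]_(t in [set` `[0, T]%R]) (2^-1 * sqnorm (uinf t))%:E + L%:E)%E.
Proof.
move=> T0 hf _ hg [t0 [t0T g_t0]] opt cvg_u cvg_L gam gam0.
have hpsi := within_continuous_steering_profile T0 hf hg.
have near_pos : \forall c \near +oo, (0 : R) < c.
  by apply: nbhs_pinfty_gt; rewrite num_real.
have u_form : \forall c \near +oo, scaled_profile T (steering_profile T f g)
    (fun i => - (c * (xstar c T i - xT i))) (ustar c).
  near=> c; have c0 : 0 < c by near: c; exact: near_pos.
  exact: optimal_control_form (opt c c0) T0 hf hg.
have psi_t0 : steering_profile T f g t0 != 0.
  by rewrite mulf_neq0 // gt_eqF // expR_gt0.
have [q cvg_p uinf_form] := scaled_profile_limit u_form cvg_u t0T psi_t0.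
have cvg_cost : energy T (ustar c) + c / 2 * sqnorm (fun i => xstar c T i - xT i)
    @[c --> +oo] --> energy T uinf + L.
  exact: cvgD (cvg_energy_scaled_profile hpsi u_form cvg_p uinf_form) cvg_L.
have [hu _] := opt gam gam0.
rewrite Jcost_energy // integral_half_sqnorm; last first.
  exact: admissible_scaled_profile hpsi uinf_form.
rewrite -EFinD lee_fin -(cvg_lim _ cvg_cost) //.
apply: limr_ge; first exact: cvgP cvg_cost.
near=> c; have c0 : 0 < c by near: c; exact: near_pos.
have [hv [hy _]] := opt c c0.
apply: (optimal_cost_le (opt gam gam0) hv hy).
by near: c; apply: nbhs_pinfty_ge; rewrite num_real.
Unshelve. all: by end_near.
Qed.
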